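(* Let $n\ge 1$, let $x_1<x_2<\dots<x_n$ be real numbers, and let $t_0,t_1,\dots,t_n:\mathbb{R}\to\mathbb{R}$ be functions. Define the piecewise function $$t(x)=\begin{cases} t_0(x), & x<x_1,\\ t_i(x), & x_i\le x<x_{i+1}\ (1\le i\le n-1),\\ t_n(x), & x_n\le x.\end{cases}$$ Define $H_1:\mathbb{R}\to\mathbb{R}$ by $$H_1(x)=1+\int_0^{\pi/2}\left(\frac{x\sec^2 s\, e^{-x\tan s}}{\left(1+e^{-x\tan s}\right)^2}-\frac12 e^{-x^2\tan s}x^2\sec^2 s\right)ds$$ (an improper Riemann integral at $s=\pi/2$), and for $a<b$ put $I(x,a,b)=H_1(x-a)-H_1(x-b)$. Then for every real $x$, $$t(x)=\bigl(1-H_1(x-x_1)\bigr)t_0(x)+\sum_{i=1}^{n-1}I(x,x_i,x_{i+1})\,t_i(x)+H_1(x-x_n)\,t_n(x).$$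
   Context: The paper calls this ''representation of a piecewise-defined function in analytic form without approximation'', assuming each $t_i$ itself has such a form. *)

From Stdlib Require Import Reals.
From Coquelicot Require Import Coquelicot.
Open Scope R_scope.

Definition H1_integrand (x s : R) : R :=
  x * (1 / (cos s) ^ 2) * exp (- x * tan s) / (1 + exp (- x * tan s)) ^ 2
  - / 2 * exp (- x ^ 2 * tan s) * x ^ 2 * (1 / (cos s) ^ 2).

Definition H1 (x : R) : R :=
  1 + RInt_gen (H1_integrand x) (at_point 0) (at_left (PI / 2)).

Definition Iab (x a b : R) : R := H1 (x - a) - H1 (x - b).

(* The integrand of [H1 x] is the derivative in [s] of [H1_profile x (tan s)], where
   [H1_profile x u = 1/(1 + e^(-xu)) + e^(-x^2 u)/2]. The profile is 1 at [u = 0] and tends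
   to 1 or 0 as [u -> +oo] according as [x >= 0] or [x < 0], so [H1] is the Heaviside step
   with [H1 0 = 1]. Hence [Iab y a b] is the indicator of [a <= y < b], and on each piece of
   the partition exactly one weight of the representation is 1 while the others vanish. *)

From Stdlib Require Import Reals Lra Lia.
From Coquelicot Require Import Coquelicot.
Open Scope R_scope.

Definition heaviside (x : R) : R := if Rle_dec 0 x then 1 else 0.

Definition H1_profile (x u : R) : R :=
  / (1 + exp (- x * u)) + / 2 * exp (- x ^ 2 * u).

Lemma is_lim_exp_mul (a : R) (l : Rbar) :
  a <> 0 -> is_lim exp (Rbar_mult a p_infty) l ->
  is_lim (fun u => exp (a * u)) p_infty l.
Proof.
  intros Ha Hl. apply (is_lim_ext (fun u => exp (a * u + 0))).
  - intros u. now rewrite Rplus_0_r.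
  - apply is_lim_comp_lin; [now rewrite Rbar_plus_0_r | exact Ha].
Qed.

Lemma is_lim_exp_neg_mul (a : R) :
  0 < a -> is_lim (fun u => exp (- a * u)) p_infty 0.
Proof.
  intros Ha. apply is_lim_exp_mul; [lra|].
  rewrite Rbar_mult_comm, (is_Rbar_mult_unique _ _ m_infty).
  - exact is_lim_exp_m.
  - apply is_Rbar_mult_p_infty_neg. simpl. lra.
Qed.

Lemma is_lim_exp_pos_mul (a : R) :
  0 < a -> is_lim (fun u => exp (a * u)) p_infty p_infty.
Proof.
  intros Ha. apply is_lim_exp_mul; [lra|].
  rewrite Rbar_mult_comm, (is_Rbar_mult_unique _ _ p_infty).
  - exact is_lim_exp_p.
  - apply is_Rbar_mult_p_infty_pos. simpl. lra.
Qed.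

Lemma is_lim_H1_profile (x : R) : is_lim (H1_profile x) p_infty (heaviside x).
Proof.
  unfold H1_profile, heaviside.
  assert (Hsq : x <> 0 -> is_lim (fun u => exp (- x ^ 2 * u)) p_infty 0).
  { intros Hx. apply is_lim_exp_neg_mul. apply pow2_gt_0 in Hx. lra. }
  destruct (Rle_dec 0 x) as [Hx | Hx]; [destruct (Req_dec x 0) as [-> | Hx0] |].
  - apply (is_lim_ext (fun _ => 1)); [intros u | apply is_lim_const].
    replace (- 0 * u) with 0 by ring. replace (- 0 ^ 2 * u) with 0 by ring.
    rewrite exp_0. field.
  - eapply is_lim_plus; [| apply is_lim_scal_l, Hsq, Hx0 |].
    + apply is_lim_inv.
      * eapply is_lim_plus; [apply is_lim_const | apply is_lim_exp_neg_mul; lra |].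
        reflexivity.
      * simpl. injection. lra.
    + unfold is_Rbar_plus. simpl. do 2 f_equal. field.
  - eapply is_lim_plus; [| apply is_lim_scal_l, Hsq; lra |].
    + apply is_lim_inv.
      * eapply is_lim_plus;
          [apply is_lim_const | apply is_lim_exp_pos_mul; lra | reflexivity].
      * discriminate.
    + unfold is_Rbar_plus. simpl. do 2 f_equal. ring.
Qed.

Lemma at_left_interval (a b : R) : a < b -> at_left b (fun c => a < c < b).
Proof.
  intros Hab. assert (Hd : 0 < b - a) by lra.
  exists (mkposreal _ Hd). intros c Hc Hcb.
  change (Rabs (c - b) < b - a) in Hc.
  apply Rabs_def2 in Hc. lra.
Qed.

Lemma filterlim_tan_at_left_PI2 : filterlim tan (at_left (PI / 2)) (Rbar_locally p_infty).
Proof.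
  intros P [M HM].
  pose proof (atan_bound M) as [HM1 HM2].
  apply (filter_imp (fun s => atan M < s < PI / 2) (fun s => P (tan s)));
    [| apply at_left_interval; lra].
  intros s Hs. apply HM.
  rewrite <- (tan_atan M). apply tan_increasing; lra.
Qed.

Lemma is_RInt_gen_at_left (f F : R -> R) (a b l : R) :
  a < b ->
  (forall c, a < c < b -> is_RInt f a c (F c - F a)) ->
  filterlim F (at_left b) (locally l) ->
  is_RInt_gen f (at_point a) (at_left b) (l - F a).
Proof.
  intros Hab HF Hl.
  apply (filterlimi_lim_ext_loc (fun ab => F (snd ab) - F (fst ab))).
  - apply (Filter_prod _ _ _ (fun c => c = a) (fun c => a < c < b));
      [reflexivity | now apply at_left_interval |].
    intros a' c -> Hc. exact (HF c Hc).
  - apply filterlim_locally. intros eps.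
    apply (Filter_prod _ _ _ (fun c => c = a) (fun c => ball l eps (F c)));
      [reflexivity | exact (proj1 (filterlim_locally _ _) Hl eps) |].
    intros a' c -> Hc. simpl.
    change (Rabs (F c - F a - (l - F a)) < eps).
    replace (F c - F a - (l - F a)) with (F c - l) by ring. exact Hc.
Qed.

Lemma is_derive_H1_profile_tan (x s : R) :
  - PI / 2 < s < PI / 2 ->
  is_derive (fun s => H1_profile x (tan s)) s (H1_integrand x s).
Proof.
  intros Hs. assert (Hc : 0 < cos s) by (apply cos_gt_0; lra).
  assert (Hp : forall z, 0 < 1 + exp z) by (intros z; pose proof (exp_pos z); lra).
  unfold H1_profile, H1_integrand, tan.
  auto_derive.
  - repeat split; try lra; apply Rgt_not_eq, Hp.
  - assert (Dtan : 1 * cos s * / cos s + sin s * (- (1 * - sin s) * / (cos s * cos s))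
                   = 1 / cos s ^ 2).
    { pose proof (sin2_cos2 s) as S. unfold Rsqr in S.
      field_simplify; try lra. f_equal. nra. }
    rewrite Dtan. replace (x * (x * 1)) with (x ^ 2) by ring. unfold Rdiv.
    set (E1 := exp (- x * (sin s * / cos s))).
    set (E2 := exp (- x ^ 2 * (sin s * / cos s))).
    field. split; [lra | apply Rgt_not_eq, Hp].
Qed.

Lemma continuous_H1_integrand (x s : R) :
  - PI / 2 < s < PI / 2 -> continuous (H1_integrand x) s.
Proof.
  intros Hs. assert (Hc : 0 < cos s) by (apply cos_gt_0; lra).
  assert (Hp : forall z, 0 < 1 + exp z) by (intros z; pose proof (exp_pos z); lra).
  apply (@ex_derive_continuous R_AbsRing R_NormedModule).
  unfold H1_integrand, tan.
  auto_derive.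
  repeat split; try (apply Rgt_not_eq; lra); try (apply Rgt_not_eq, Hp);
    try (apply pow_nonzero; lra); try (apply Rgt_not_eq, pow_lt, Hp).
  all: rewrite Rmult_1_r; apply Rmult_integral_contrapositive_currified;
    try (apply Rgt_not_eq; lra); apply Rgt_not_eq, Hp.
Qed.

Lemma H1_eq_heaviside (x : R) : H1 x = heaviside x.
Proof.
  pose proof PI_RGT_0.
  assert (Hint : is_RInt_gen (H1_integrand x) (at_point 0) (at_left (PI / 2))
                   (heaviside x - H1_profile x (tan 0))).
  { apply (is_RInt_gen_at_left _ (fun s => H1_profile x (tan s))); [lra | |].
    - intros c Hc. apply (is_RInt_derive (fun s => H1_profile x (tan s))).
      + intros s Hs. rewrite Rmin_left, Rmax_right in Hs by lra.
        apply is_derive_H1_profile_tan. lra.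
      + intros s Hs. rewrite Rmin_left, Rmax_right in Hs by lra.
        apply continuous_H1_integrand. lra.
    - exact (filterlim_comp _ _ _ tan (H1_profile x) _ _ _
               filterlim_tan_at_left_PI2 (is_lim_H1_profile x)). }
  unfold H1. rewrite (is_RInt_gen_unique _ _ Hint), tan_0.
  unfold H1_profile. rewrite !Rmult_0_r, exp_0. field.
Qed.

Lemma H1_sub_ge (y a : R) : a <= y -> H1 (y - a) = 1.
Proof.
  intros H. rewrite H1_eq_heaviside. unfold heaviside.
  destruct (Rle_dec 0 (y - a)); lra.
Qed.

Lemma H1_sub_lt (y a : R) : y < a -> H1 (y - a) = 0.
Proof.
  intros H. rewrite H1_eq_heaviside. unfold heaviside.
  destruct (Rle_dec 0 (y - a)); lra.
Qed.

Lemma Iab_in (y a b : R) : a <= y < b -> Iab y a b = 1.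
Proof. intros [Ha Hb]. unfold Iab. rewrite H1_sub_ge, H1_sub_lt by lra. ring. Qed.

Lemma Iab_below (y a b : R) : y < a -> y < b -> Iab y a b = 0.
Proof. intros Ha Hb. unfold Iab. rewrite !H1_sub_lt by lra. ring. Qed.

Lemma Iab_above (y a b : R) : a <= y -> b <= y -> Iab y a b = 0.
Proof. intros Ha Hb. unfold Iab. rewrite !H1_sub_ge by lra. ring. Qed.

Lemma sum_n_m_eq_zero {G : AbelianMonoid} (a : nat -> G) (m p : nat) :
  (forall k, (m <= k <= p)%nat -> a k = zero) -> sum_n_m a m p = zero.
Proof.
  intros Ha. rewrite (sum_n_m_ext_loc _ (fun _ => zero)) by exact Ha.
  apply sum_n_m_const_zero.
Qed.

Lemma sum_n_m_single {G : AbelianMonoid} (a : nat -> G) (m i p : nat) :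
  (m <= i <= p)%nat ->
  (forall k, (m <= k <= p)%nat -> k <> i -> a k = zero) ->
  sum_n_m a m p = a i.
Proof.
  intros Hi Ha.
  rewrite (sum_n_m_Chasles a m i p) by lia.
  rewrite (sum_n_m_eq_zero a (S i) p), plus_zero_r by (intros k Hk; apply Ha; lia).
  destruct (Nat.eq_dec i m) as [-> | Hne]; [apply sum_n_n |].
  destruct i as [| j]; [lia |].
  rewrite sum_n_Sm by lia.
  rewrite (sum_n_m_eq_zero a m j) by (intros k Hk; apply Ha; lia).
  apply plus_zero_l.
Qed.

Lemma exists_interval_index (xs : nat -> R) (y : R) (m : nat) :
  (1 <= m)%nat -> xs 1%nat <= y < xs m ->
  exists i, (1 <= i < m)%nat /\ xs i <= y < xs (S i).
Proof.
  induction m as [| m IH]; intros Hm Hy; [lia |].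
  assert (Hm0 : m <> 0%nat) by (intros ->; lra).
  destruct (Rle_dec (xs m) y) as [Hle | Hlt].
  - exists m. split; [lia | lra].
  - destruct IH as [i [Hi Hiy]]; [lia | lra |].
    exists i. split; [lia | exact Hiy].
Qed.

Section StepWeights.

Variables (n : nat) (xs : nat -> R).
Hypothesis xs_increasing : forall i, (1 <= i)%nat -> (i < n)%nat -> xs i < xs (S i).

Lemma xs_le (i j : nat) : (1 <= i)%nat -> (i <= j <= n)%nat -> xs i <= xs j.
Proof.
  intros Hi [Hij Hjn]. induction Hij as [| j Hij IH]; [lra |].
  pose proof (xs_increasing j ltac:(lia) ltac:(lia)). specialize (IH ltac:(lia)). lra.
Qed.

Variable f : nat -> R.

Lemma sum_Iab_below (y : R) :
  y < xs 1%nat -> sum_n_m (fun i => Iab y (xs i) (xs (S i)) * f i) 1 (n - 1) = 0.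
Proof.
  intros Hy. apply (sum_n_m_eq_zero (G := R_AbelianMonoid)). intros k Hk.
  assert (xs 1%nat <= xs k) by (apply xs_le; lia).
  assert (xs 1%nat <= xs (S k)) by (apply xs_le; lia).
  rewrite Iab_below by lra. apply Rmult_0_l.
Qed.

Lemma sum_Iab_above (y : R) :
  xs n <= y -> sum_n_m (fun i => Iab y (xs i) (xs (S i)) * f i) 1 (n - 1) = 0.
Proof.
  intros Hy. apply (sum_n_m_eq_zero (G := R_AbelianMonoid)). intros k Hk.
  assert (xs k <= xs n) by (apply xs_le; lia).
  assert (xs (S k) <= xs n) by (apply xs_le; lia).
  rewrite Iab_above by lra. apply Rmult_0_l.
Qed.

Lemma sum_Iab_inside (y : R) (i : nat) :
  (1 <= i < n)%nat -> xs i <= y < xs (S i) ->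
  sum_n_m (fun i => Iab y (xs i) (xs (S i)) * f i) 1 (n - 1) = f i.
Proof.
  intros Hi Hy.
  rewrite (sum_n_m_single _ 1 i (n - 1)); [| lia |].
  - rewrite Iab_in by exact Hy. apply Rmult_1_l.
  - intros k Hk Hki. destruct (Nat.lt_ge_cases k i).
    + assert (xs k <= xs i) by (apply xs_le; lia).
      assert (xs (S k) <= xs i) by (apply xs_le; lia).
      rewrite Iab_above by lra. apply Rmult_0_l.
    + assert (xs (S i) <= xs k) by (apply xs_le; lia).
      assert (xs (S i) <= xs (S k)) by (apply xs_le; lia).
      rewrite Iab_below by lra. apply Rmult_0_l.
Qed.

End StepWeights.

Theorem theorem1 (n : nat) (xs : nat -> R) (ts : nat -> R -> R) (t : R -> R) :
  (1 <= n)%nat ->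
  (forall i : nat, (1 <= i)%nat -> (i < n)%nat -> xs i < xs (S i)) ->
  (forall y : R, y < xs 1%nat -> t y = ts 0%nat y) ->
  (forall (i : nat) (y : R), (1 <= i)%nat -> (i <= n - 1)%nat ->
      xs i <= y < xs (S i) -> t y = ts i y) ->
  (forall y : R, xs n <= y -> t y = ts n y) ->
  forall y : R,
    t y = (1 - H1 (y - xs 1%nat)) * ts 0%nat y
          + sum_n_m (fun i => Iab y (xs i) (xs (S i)) * ts i y) 1 (n - 1)
          + H1 (y - xs n) * ts n y.
Proof.
  intros Hn Hinc Hfirst Hmid Hlast y.
  assert (xs 1%nat <= xs n) by (apply (xs_le n xs Hinc); lia).
  destruct (Rlt_dec y (xs 1%nat)) as [Hy1 | Hy1].
  { rewrite (Hfirst y Hy1), (sum_Iab_below n xs Hinc (fun i => ts i y) y Hy1).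
    rewrite !H1_sub_lt by lra. ring. }
  destruct (Rle_dec (xs n) y) as [Hyn | Hyn].
  { rewrite (Hlast y Hyn), (sum_Iab_above n xs Hinc (fun i => ts i y) y Hyn).
    rewrite !H1_sub_ge by lra. ring. }
  destruct (exists_interval_index xs y n Hn ltac:(lra)) as [i [Hi Hiy]].
  rewrite (Hmid i y ltac:(lia) ltac:(lia) Hiy),
    (sum_Iab_inside n xs Hinc (fun i => ts i y) y i Hi Hiy).
  rewrite H1_sub_ge, H1_sub_lt by lra. ring.
Qed.
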